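(* Let $R$ be a compact Hausdorff unitary topological ring satisfying the first countability axiom. (i) Every surjective continuous $R$-linear map $f:M\to N$ of t.d. $R$-modules is strict and admits a continuous (not necessarily additive) map $s:N\to M$ with $f\circ s=\mathrm{id}_N$. (ii) An injective continuous $R$-linear map $i:M\to N$ of t.d. $R$-modules is strict if and only if there is a continuous (not necessarily additive) map $r:N\to M$ with $r\circ i=\mathrm{id}_M$.
   Context: A complete totally disconnected (t.d.) $R$-module is a Hausdorff, complete topological left $R$-module which has a basis of neighbourhoods of $0$ consisting of open submodules and which satisfies the second countability axiom. A continuous $R$-linear map $f:M\to N$ is strict if the induced bijection $M/\ker f\to f(M)$ is a homeomorphism (quotient topology on the source, subspace topology on the target). *)

From HB Require Import structures.
From mathcomp Require Import all_boot all_order all_algebra.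
From mathcomp Require Import boolp classical_sets functions cardinality topology pseudometric_normed_Zmodule.
Set Implicit Arguments. Unset Strict Implicit. Unset Printing Implicit Defensive.
Import Order.TTheory GRing.Theory Num.Theory.
Local Open Scope classical_set_scope.
Local Open Scope ring_scope.

#[short(type="topPzRingType")]
HB.structure Definition TopPzRing := {R of GRing.PzRing R & Topological R}.

#[short(type="topLmodType")]
HB.structure Definition TopLmod (R : topPzRingType) :=
  {M of GRing.Lmodule R M & Topological M}.

Definition topological_ring (R : topPzRingType) : Prop :=
  continuous (fun xy : R * R => xy.1 + xy.2) /\
  continuous (fun x : R => - x) /\
  continuous (fun xy : R * R => xy.1 * xy.2).

Definition topological_module (R : topPzRingType) (M : topLmodType R) : Prop :=
  continuous (fun xy : M * M => xy.1 + xy.2) /\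
  continuous (fun x : M => - x) /\
  continuous (fun rx : R * M => rx.1 *: rx.2).

Definition first_countable (T : topologicalType) : Prop :=
  forall x : T, exists2 B : set (set T), countable B &
    (forall b, B b -> nbhs x b) /\
    (forall U, nbhs x U -> exists2 b, B b & b `<=` U).

Definition is_submodule (R : pzRingType) (M : lmodType R) (V : set M) : Prop :=
  V 0 /\ (forall x y, V x -> V y -> V (x + y)) /\
  (forall (r : R) x, V x -> V (r *: x)).

Definition module_cauchy (R : topPzRingType) (M : topLmodType R)
    (F : set_system M) : Prop :=
  forall U, nbhs (0 : M) U -> exists2 A, F A & forall x y, A x -> A y -> U (x - y).

Definition module_complete (R : topPzRingType) (M : topLmodType R) : Prop :=
  forall F : set_system M, ProperFilter F -> module_cauchy F ->
    exists x : M, F --> x.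

Definition td_module (R : topPzRingType) (M : topLmodType R) : Prop :=
  [/\ topological_module M,
      hausdorff_space M,
      module_complete M,
      (forall U, nbhs (0 : M) U ->
         exists V : set M, [/\ open V, is_submodule V & V `<=` U]) &
      @second_countable M].

(* f : M -> N is strict: the induced bijection M/ker f -> f(M) is a
   homeomorphism, where M/ker f carries the quotient topology and f(M) the
   subspace topology.  Unfolded: open sets of M/ker f are the images of the
   open subsets of M that are saturated for x ~ y <-> f x = f y; open sets of
   f(M) are the traces V `&` range f of open sets V of N.  The first conjunct
   is continuity of the induced bijection, the second continuity of its
   inverse. *)
Definition strict (R : topPzRingType) (M N : topLmodType R) (f : M -> N) : Prop :=
  (forall V : set N, open V -> open (f @^-1` (V `&` range f))) /\
  (forall U : set M, open U -> (forall x y, U x -> f x = f y -> U y) ->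
     exists2 V : set N, open V & f @` U = V `&` range f).

(* Both parts rest on a decreasing sequence of submodules forming a basis of
   neighbourhoods of 0, which second countability provides, and on completeness
   along such a sequence.
   (i) A Baire category argument in N shows that f maps every open submodule onto
   a neighbourhood of 0, so f is open (hence strict) and the images f(B n) of a
   basis of M form a basis of N.  A section is then built by successive
   corrections s_(n+1) y = s_n y + c_n y with c_n y in B n, where s_n only depends
   on the coset y + f(B n); the limit s is continuous because each s_n is
   locally constant.
   (ii) If i is strict, the preimages of a basis of N form a basis of M, so the
   range of i is closed.  Let r y be a point whose image approximates y at every
   level n at which range i comes within U n of y.  On the range, r inverts the
   homeomorphism i; off the range only finitely many levels qualify, and r is
   locally constant there.  Conversely, a continuous retraction makes i a
   homeomorphism onto its image. *)

From HB Require Import structures.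
From mathcomp Require Import all_boot all_order all_algebra.
From mathcomp Require Import boolp classical_sets functions cardinality topology pseudometric_normed_Zmodule.
Set Implicit Arguments. Unset Strict Implicit. Unset Printing Implicit Defensive.
Import Order.TTheory GRing.Theory Num.Theory.
Local Open Scope classical_set_scope.
Local Open Scope ring_scope.

Section Submodule.
Variables (R : pzRingType) (M : lmodType R) (V : set M).
Hypothesis V_submod : is_submodule V.

Lemma submod0 : V 0. Proof. by case: V_submod. Qed.

Lemma submodD x y : V x -> V y -> V (x + y).
Proof. by case: V_submod => _ [+ _]; apply. Qed.

Lemma submodZ (r : R) x : V x -> V (r *: x).
Proof. by case: V_submod => _ [_ +]; apply. Qed.

Lemma submodN x : V x -> V (- x).
Proof. by rewrite -scaleN1r; apply: submodZ. Qed.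

Lemma submodB x y : V x -> V y -> V (x - y).
Proof. by move=> Vx Vy; apply/submodD/submodN. Qed.

Lemma submod_subC x y : V (x - y) -> V (y - x).
Proof. by move=> /submodN; rewrite opprB. Qed.

Lemma submod_sub_trans y x z : V (x - y) -> V (y - z) -> V (x - z).
Proof. by move=> Vxy Vyz; rewrite -(subrK y x) -addrA; apply: submodD. Qed.

Lemma submod_sub_congrl {x y z} : V (x - y) -> V (x - z) <-> V (y - z).
Proof.
move=> Vxy; split; first by apply: submod_sub_trans; apply: submod_subC.
exact: submod_sub_trans.
Qed.

Lemma submod_sub_congrr {x y z} : V (y - z) -> V (x - y) <-> V (x - z).
Proof.
move=> Vyz; split=> [Vxy|Vxz]; first exact: submod_sub_trans Vyz.
by apply: submod_sub_trans Vxz _; apply: submod_subC.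
Qed.

End Submodule.

Lemma submodI (R : pzRingType) (M : lmodType R) (V W : set M) :
  is_submodule V -> is_submodule W -> is_submodule (V `&` W).
Proof.
move=> V_submod W_submod; split; first by split; apply: submod0.
split=> [x y [Vx Wx] [Vy Wy]|r x [Vx Wx]]; first by split; apply: submodD.
by split; apply: submodZ.
Qed.

Section LinearSubmodule.
Variables (R : pzRingType) (M N : lmodType R) (f : {linear M -> N}).

Lemma submod_preimage (V : set N) : is_submodule V -> is_submodule (f @^-1` V).
Proof.
move=> V_submod; split; first by rewrite /= linear0; apply: submod0.
split=> [x y Vx Vy|r x Vx]; first by rewrite /= linearD; apply: submodD.
by rewrite /= linearZ; apply: submodZ.
Qed.

Lemma submod_image (V : set M) : is_submodule V -> is_submodule (f @` V).
Proof.
move=> V_submod; split; first by exists 0; rewrite ?linear0 //; apply: submod0.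
split=> [_ _ [x Vx <-] [y Vy <-]|r _ [x Vx <-]].
  by exists (x + y); rewrite ?linearD //; apply: submodD.
by exists (r *: x); rewrite ?linearZ //; apply: submodZ.
Qed.

End LinearSubmodule.

Section TopologicalModule.
Variables (R : topPzRingType) (M : topLmodType R).
Hypothesis M_top : topological_module M.

Lemma nbhs_addl (a x : M) (A : set M) :
  nbhs (a + x) A -> nbhs x (fun z => A (a + z)).
Proof.
move=> /(M_top.1 (a, x)) [[P Q] /= [Pa Qx] PQA].
by apply: filterS Qx => z Qz; apply: (PQA (a, z)); split=> //; apply: nbhs_singleton.
Qed.

Lemma nbhs0_translate (x : M) (A : set M) :
  nbhs 0 A -> nbhs x (fun z => A (z - x)).
Proof.
rewrite -(addNr x) => /nbhs_addl; apply: filterS => z.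
by rewrite addrC.
Qed.

Lemma nbhs_translate0 (x : M) (A : set M) :
  nbhs x A -> nbhs 0 (fun z => A (x + z)).
Proof. by rewrite -{1}(addr0 x); apply: nbhs_addl. Qed.

Lemma open_submod_nbhs0 (V : set M) : open V -> is_submodule V -> nbhs 0 V.
Proof. by move=> oV V_submod; apply: open_nbhs_nbhs; split=> //; apply: submod0. Qed.

Definition submod_basis (C : nat -> set M) : Prop :=
  [/\ (forall n, is_submodule (C n)), (forall n, nbhs 0 (C n)),
      (forall n, C n.+1 `<=` C n) &
      (forall U, nbhs 0 U -> exists n, C n `<=` U)].

Section SubmodBasis.
Variable C : nat -> set M.
Hypothesis C_basis : submod_basis C.

Lemma submod_basis_le m n : (m <= n)%N -> C n `<=` C m.
Proof.
case: C_basis => _ _ C_dec _.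
by apply: (@homo_leq _ C (fun A B => B `<=` A)) => // [A|B A D BA DB] x // /DB /BA.
Qed.

Lemma submod_basis_comp (g : nat -> nat) :
  (forall k, (g k <= g k.+1)%N) -> (forall k, (k <= g k)%N) ->
  submod_basis (C \o g).
Proof.
move=> g_incr g_geq; case: C_basis => C_submod C_nbhs _ C_small; split.
- by move=> k; apply: C_submod.
- by move=> k; apply: C_nbhs.
- by move=> k; apply/submod_basis_le/g_incr.
- by move=> U /C_small [n CnU]; exists n => x /(submod_basis_le (g_geq n)) /CnU.
Qed.

Lemma submod_basis_eq0 : hausdorff_space M -> forall d, (forall n, C n d) -> d = 0.
Proof.
move=> M_hausdorff d Cd; apply: M_hausdorff => A B dA B0.
have [C_submod _ _ C_small] := C_basis.
have [n CnAB] := C_small _ (filterI (nbhs_translate0 dA) B0).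
exists 0; split; last exact: nbhs_singleton B0.
by have [] := CnAB _ (submodN (C_submod n) (Cd n)); rewrite addrN.
Qed.

Lemma submod_basis_cvg : module_complete M -> forall p : nat -> M,
  (forall n, C n (p n.+1 - p n)) -> exists x, forall n, C n (x - p n).
Proof.
move=> M_complete p p_step; have [C_submod C_nbhs _ C_small] := C_basis.
have p_cauchy n k : (n <= k)%N -> C n (p k - p n).
  move=> /subnK <-; elim: (k - n)%N => [|j IH]; first by rewrite subrr; apply: submod0.
  rewrite addSn; apply: (submod_sub_trans (C_submod n) _ IH).
  exact/(submod_basis_le (leq_addl j n))/p_step.
have [x px] : exists x : M, p @ \oo --> x.
  apply: M_complete => U /C_small [n CnU].
  exists (p @` [set k | (n <= k)%N]); first by exists n => // k /= nk; exists k.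
  move=> _ _ [a /= na <-] [b /= nb <-]; apply: CnU.
  apply: (submod_sub_trans (C_submod n) (p_cauchy _ _ na)).
  exact/(submod_subC (C_submod n))/p_cauchy.
exists x => n; have /px [K _ pK] := nbhs0_translate x (C_nbhs n).
apply: (submod_sub_trans (C_submod n) (submod_subC (C_submod n) (pK _ (leq_maxl K n)))).
exact/p_cauchy/leq_maxr.
Qed.

End SubmodBasis.

Lemma submod_basis_of_seq (O : nat -> set M) :
  (forall k, nbhs 0 (O k) /\ is_submodule (O k)) ->
  (forall U, nbhs 0 U -> exists k, O k `<=` U) ->
  exists C, submod_basis C /\ C 0 = setT.
Proof.
move=> O_spec O_small.
pose C := fix C n := if n is n'.+1 then C n' `&` O n' else setT.
exists C; split=> //; split.
- by elim=> [|n IH] //; apply: submodI IH (O_spec n).2.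
- by elim=> [|n IH]; [exact: filterT|exact: filterI IH (O_spec n).1].
- by move=> n x [].
- by move=> U /O_small [k OkU]; exists k.+1 => x [_ /OkU].
Qed.

Lemma td_submod_basis : td_module M -> exists C, submod_basis C /\ C 0 = setT.
Proof.
case=> _ _ _ M_small [Bs Bs_count [Bs_open Bs_basis]].
have /countable_injP [idx idx_inj] := Bs_count.
have /choice [S S_spec] : forall b : set M, exists S : set M,
    [/\ nbhs 0 S, is_submodule S & nbhs 0 b -> S `<=` b].
  move=> b; have [b_nbhs|b_not_nbhs] := pselect (nbhs (0 : M) b).
    case: (M_small _ b_nbhs) => V [oV V_submod Vb].
    by exists V; split=> //; apply: open_submod_nbhs0.
  by exists setT; split=> //; exact: filterT.
pose b_ k := xget setT (fun b => Bs b /\ idx b = k).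
apply: (@submod_basis_of_seq (S \o b_)) => [k|U].
  by have [] := S_spec (b_ k).
move=> /Bs_basis [b [Bb b0] bU]; exists (idx b).
have b_idx : b_ (idx b) = b.
  have [Bb' idx_eq] := @xgetPex _ setT (fun b' => Bs b' /\ idx b' = idx b)
    (ex_intro _ b (conj Bb erefl)).
  by apply: idx_inj; rewrite ?inE.
rewrite /= b_idx.
have b_nbhs : nbhs 0 b by apply: open_nbhs_nbhs; split=> //; apply: Bs_open.
by case: (S_spec b) => _ _ /(_ b_nbhs) Sb x /Sb /bU.
Qed.

Lemma submod_cosets_countable : @second_countable M -> forall V : set M,
  nbhs 0 V -> is_submodule V -> exists D : nat -> M, forall x, exists k, V (x - D k).
Proof.
move=> [Bs Bs_count [_ Bs_basis]] V V_nbhs V_submod.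
have /countable_injP [idx idx_inj] := Bs_count.
pose in_basic k d := exists b, [/\ Bs b, idx b = k & b d].
exists (fun k => xget 0 (in_basic k)) => x.
have [b [Bb bx] bV] := Bs_basis x _ (nbhs0_translate x V_nbhs).
exists (idx b).
have [b' [Bb' idx_eq b'd]] := @xgetPex _ 0 (in_basic (idx b))
  (ex_intro _ x (ex_intro _ b (And3 Bb erefl bx))).
have b'_eq : b' = b by apply: idx_inj; rewrite ?inE.
by rewrite b'_eq in b'd; apply: (submod_subC V_submod); apply: bV.
Qed.

End TopologicalModule.

Section Strict.
Variables (R : topPzRingType) (M N : topLmodType R) (f : M -> N).
Hypothesis f_cont : continuous f.

Lemma open_preimage_range (V : set N) : open V -> open (f @^-1` (V `&` range f)).
Proof.
have -> : f @^-1` (V `&` range f) = f @^-1` V.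
  by apply/seteqP; split=> x; [case|split=> //; exists x].
by move: V; apply/continuousP.
Qed.

Lemma open_map_strict : (forall U : set M, open U -> open (f @` U)) -> strict f.
Proof.
move=> f_open; split=> [|U oU _]; first exact: open_preimage_range.
exists (f @` U); first exact: f_open.
by apply/seteqP; split=> [_ [x Ux <-]|y [] //]; split=> //; exists x.
Qed.

Lemma retract_strict (r : N -> M) : continuous r -> cancel f r -> strict f.
Proof.
move=> r_cont fK; split=> [|U oU _]; first exact: open_preimage_range.
exists (r @^-1` U); first by move: U oU; apply/continuousP.
apply/seteqP; split=> [_ [x Ux <-]|y [/= Ury [x _ fxy]]].
  by split; [rewrite /= fK|exists x].
by exists x; rewrite // -(fK x) fxy.
Qed.

End Strict.

Section Retraction.
Variables (R : topPzRingType) (M N : topLmodType R).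
Hypotheses (M_top : topological_module M) (N_top : topological_module N).
Hypotheses (M_complete : module_complete M) (N_hausdorff : hausdorff_space N).
Variables (i : {linear M -> N}) (U : nat -> set N).
Hypotheses (i_inj : injective i) (U_basis : submod_basis U) (U0 : U 0 = setT).
Hypothesis iU_basis : submod_basis (fun n => i @^-1` U n).

Let U_submod n : is_submodule (U n). Proof. by case: U_basis. Qed.

Definition approx_at n y := exists x, U n (y - i x).

Definition best_approx y x := forall n, approx_at n y -> U n (y - i x).

Lemma approx_at_le m n y : (m <= n)%N -> approx_at n y -> approx_at m y.
Proof. by move=> mn [x Uyx]; exists x; apply: (submod_basis_le U_basis mn Uyx). Qed.

Lemma approx_at_congr n y z : U n (z - y) -> approx_at n z <-> approx_at n y.
Proof.
by move=> Uzy; split=> -[x Ux]; exists x; apply/(submod_sub_congrl (U_submod _) Uzy).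
Qed.

Lemma approx_at_all y : (forall n, approx_at n y) -> exists x, y = i x.
Proof.
move=> /choice [xs Uyxs].
have [x x_lim] : exists x, forall n, (i @^-1` U n) (x - xs n).
  apply: (submod_basis_cvg M_top iU_basis M_complete) => n /=; rewrite linearB.
  apply: (submod_sub_trans (U_submod n) _ (Uyxs n)); apply: submod_subC => //.
  exact: (submod_basis_le U_basis (leqnSn n) (Uyxs n.+1)).
exists x; apply/eqP; rewrite -subr_eq0; apply/eqP.
apply: (submod_basis_eq0 N_top U_basis N_hausdorff) => n.
apply: (submod_sub_trans (U_submod n) (Uyxs n)); apply: submod_subC => //.
by have := x_lim n; rewrite /= linearB.
Qed.

Lemma best_approx_exists y : exists x, best_approx y x.
Proof.
have [/approx_at_all [x ->]|/existsNP [n]] := pselect (forall n, approx_at n y).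
  by exists x => n _; rewrite subrr; apply: submod0.
(* Descend to the last level at which [y] is approximable; level 0 always is. *)
elim: n => [|n IH] not_n; first by exfalso; apply: not_n; exists 0; rewrite U0.
have [[x Uyx]|/IH //] := pselect (approx_at n y).
exists x => m m_y; have [mn|nm] := leqP m n; first exact: (submod_basis_le U_basis mn Uyx).
by exfalso; apply/not_n/(approx_at_le nm).
Qed.

Lemma best_approx_local n0 y z : ~ approx_at n0 y -> U n0 (z - y) ->
  best_approx z = best_approx y.
Proof.
move=> not_y Uzy; apply/funext => x; apply/propext.
split=> best n; have [le_n|lt_n] := leqP n n0.
- have Un_zy := submod_basis_le U_basis le_n Uzy.
  by move/(approx_at_congr Un_zy)/best/(submod_sub_congrl (U_submod _) Un_zy).
- by move/(approx_at_le (ltnW lt_n)).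
- have Un_zy := submod_basis_le U_basis le_n Uzy.
  by move/(approx_at_congr Un_zy)/best/(submod_sub_congrl (U_submod _) Un_zy).
- by move/(approx_at_le (ltnW lt_n))/(approx_at_congr Uzy).
Qed.

Definition retraction y := xget 0 (best_approx y).

Lemma retractionP y : best_approx y (retraction y).
Proof. exact: (xgetPex 0 (best_approx_exists y)). Qed.

Lemma retractionK : cancel i retraction.
Proof.
move=> x; apply: i_inj; apply/eqP; rewrite -subr_eq0; apply/eqP.
apply: (submod_basis_eq0 N_top U_basis N_hausdorff) => n.
apply: (submod_subC (U_submod n)); apply: retractionP.
by exists x; rewrite subrr; apply: submod0.
Qed.

Lemma retraction_continuous : continuous retraction.
Proof.
move=> y A; have [_ U_nbhs _ _] := U_basis.
have [/approx_at_all [x0 ->]|/existsNP [n0 not_y]] := pselect (forall n, approx_at n y).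
  rewrite retractionK => /(nbhs_translate0 M_top); case: iU_basis => _ _ _ small.
  move=> /small [k iUkA].
  apply: filterS (nbhs0_translate N_top (i x0) (U_nbhs k)) => z Uz /=.
  have Uz_r : U k (z - i (retraction z)) by apply: retractionP; exists x0.
  have := iUkA (retraction z - x0); rewrite [x0 + _]addrC subrK; apply.
  by rewrite /= linearB; apply/(submod_sub_congrl (U_submod k) Uz_r).
move=> A_r; apply: filterS (nbhs0_translate N_top y (U_nbhs n0)) => z Uzy /=.
by rewrite /retraction (best_approx_local not_y Uzy); apply: nbhs_singleton.
Qed.

End Retraction.

Lemma strict_preimage_submod_basis (R : topPzRingType) (M N : topLmodType R)
    (i : {linear M -> N}) (U : nat -> set N) :
  continuous i -> injective i -> strict i ->
  (forall V : set M, nbhs 0 V -> exists W, [/\ open W, is_submodule W & W `<=` V]) ->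
  submod_basis U -> submod_basis (fun n => i @^-1` U n).
Proof.
move=> i_cont i_inj i_strict M_small [U_submod U_nbhs U_dec U_small]; split.
- by move=> n; apply: submod_preimage.
- by move=> n; apply: i_cont; rewrite linear0.
- by move=> n x /U_dec.
move=> V /M_small [O [oO O_submod OV]].
have [W oW iO] : exists2 W : set N, open W & i @` O = W `&` range i.
  by apply: i_strict.2 => // x y Ox /i_inj <-.
have [W0 _] : (W `&` range i) 0 by rewrite -iO; exists 0; rewrite ?linear0 //; apply: submod0.
have [n UnW] := U_small W (open_nbhs_nbhs (conj oW W0)).
exists n => x Unx; apply: OV.
have [o Oo /i_inj <- //] : (i @` O) (i x) by rewrite iO; split; [apply: UnW|exists x].
Qed.

Lemma subrDDBB (V : zmodType) (y u a b c : V) :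
  (y + u - (a + b)) - (y - (a + c)) = u - (b - c).
Proof.
rewrite [y + u]addrC -addrA -addrA; congr (_ + _).
rewrite !opprB opprD !addrA.
rewrite [y - a - b + a]addrAC -[y - a + a]addrA addNr addr0.
by rewrite addrAC [y - b - y]addrAC subrr add0r addrC.
Qed.

Section OpenMapping.
Variables (R : topPzRingType) (M N : topLmodType R).
Hypotheses (M_top : topological_module M) (N_top : topological_module N).
Hypotheses (M_complete : module_complete M) (N_complete : module_complete N).
Variable U : nat -> set N.
Hypothesis U_basis : submod_basis U.

Let U_submod n : is_submodule (U n). Proof. by case: U_basis. Qed.

Definition adherent (F : set N) y := forall n, exists2 a, F a & U n (y - a).

Lemma baire_submod_basis (F : nat -> set N) : (forall y, exists k, F k y) ->
  exists k y0 m, forall u, U m u -> adherent (F k) (y0 + u).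
Proof.
move=> F_cover; apply: contrapT => no_dense.
(* Otherwise nested balls y_k + U m_k, the k-th avoiding F k, shrink to a point
   lying in no F k. *)
have /choice [next next_spec] : forall kym : nat * (N * nat), exists q : N * nat,
    [/\ U kym.2.2 (q.1 - kym.2.1), (kym.2.2 < q.2)%N &
        forall w, U q.2 (w - q.1) -> ~ F kym.1 w].
  move=> [k [y m]] /=.
  have /existsNP [u /not_implyP [Umu /existsNP [n not_adh]]] :
    ~ forall u, U m u -> adherent (F k) (y + u) by move=> dense; apply: no_dense; exists k, y, m.
  exists (y + u, maxn n m.+1) => /=; split; first by rewrite addrAC subrr add0r.
    exact: leq_maxr.
  move=> w Uw Fw; apply: not_adh; exists w => //.
  exact: (submod_subC (U_submod n)) (submod_basis_le U_basis (leq_maxl _ _) Uw).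
pose seq_q := fix seq_q k := if k is k'.+1 then next (k', seq_q k') else (0 : N, 0%N).
have q_spec k := next_spec (k, seq_q k).
pose g k := (seq_q k).2.
have g_incr k : (g k < g k.+1)%N by case: (q_spec k).
have gU_basis : submod_basis (U \o g).
  apply: (submod_basis_comp U_basis) => [k|]; first exact: ltnW (g_incr k).
  by elim=> // k IH; apply: leq_ltn_trans IH (g_incr k).
have q_step k : (U \o g) k ((seq_q k.+1).1 - (seq_q k).1) by case: (q_spec k).
have [x x_lim] := submod_basis_cvg N_top gU_basis N_complete q_step.
have [k Fkx] := F_cover x.
by have [_ _ notF] := q_spec k; apply: (notF x) => //; exact: (x_lim k.+1).
Qed.

Variable f : {linear M -> N}.
Hypotheses (M_second : @second_countable M) (f_surj : forall y, exists x, f x = y).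

Lemma image_adherent (V : set M) : nbhs 0 V -> is_submodule V ->
  exists m, forall u, U m u -> adherent (f @` V) u.
Proof.
move=> V_nbhs V_submod.
have [D D_cosets] := submod_cosets_countable M_top M_second V_nbhs V_submod.
pose F k := [set f (D k + v) | v in V].
have [k [y0 [m dense]]] : exists k y0 m, forall u, U m u -> adherent (F k) (y0 + u).
  apply: baire_submod_basis => y; have [x <-] := f_surj y; have [k Vxk] := D_cosets x.
  by exists k, (x - D k) => //; rewrite addrC subrK.
exists m => u Umu n.
have [_ [v Vv <-] Uuv] := dense u Umu n.
have [_ [v' Vv' <-] Uv'] := dense 0 (submod0 (U_submod m)) n.
rewrite addr0 in Uv'.
exists (f (v - v')); first by exists (v - v') => //; apply: submodB.
by rewrite linearB -(subrDDBB y0 u (f (D k))) -!linearD; apply: submodB.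
Qed.

Hypotheses (N_hausdorff : hausdorff_space N) (f_cont : continuous f).
Variable B : nat -> set M.
Hypothesis B_basis : submod_basis B.

Lemma image_submod_basis_nbhs0 j : exists m, U m `<=` f @` B j.
Proof.
have [B_submod B_nbhs _ B_small] := B_basis.
have /choice [m0 m0_adh] : forall i, exists m, forall u, U m u -> adherent (f @` B (j.+1 + i)) u.
  by move=> i; apply: image_adherent; [apply: B_nbhs|apply: B_submod].
pose m i := maxn (m0 i) i.
have m_adh i u : U (m i) u -> adherent (f @` B (j.+1 + i)) u.
  by move=> /(submod_basis_le U_basis (leq_maxl _ _)); apply: m0_adh.
exists (m 0) => y Uy.
have /choice [corr corr_spec] : forall ip : nat * M, exists x, U (m ip.1) (y - f ip.2) ->
    B (j.+1 + ip.1) x /\ U (m ip.1.+1) (y - f ip.2 - f x).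
  move=> [i p] /=; have [/m_adh adh|] := pselect (U (m i) (y - f p)); last by exists 0.
  by have [_ [x Bx <-] Uyx] := adh (m i.+1); exists x.
pose ps := fix ps i := if i is i'.+1 then ps i' + corr (i', ps i') else 0.
have ps_close i : U (m i) (y - f (ps i)).
  elim: i => [|i IH]; first by rewrite /= linear0 subr0.
  by have [_] := corr_spec (i, ps i) IH; rewrite /= linearD opprD addrA.
have Bj_basis : submod_basis (B \o addn j.+1).
  by apply: (submod_basis_comp B_basis) => k; [rewrite addnS|apply: leq_addl].
have ps_step i : (B \o addn j.+1) i (ps i.+1 - ps i).
  by have [+ _] := corr_spec (i, ps i) (ps_close i); rewrite /= addrC addKr.
have [x x_lim] := submod_basis_cvg M_top Bj_basis M_complete ps_step.
exists x; first by have := x_lim 0; rewrite /= subr0 addn0; apply: (submod_basis_le B_basis).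
apply/eqP; rewrite eq_sym -subr_eq0; apply/eqP.
apply: (submod_basis_eq0 N_top U_basis N_hausdorff) => n.
have /B_small [q Bq_small] : nbhs 0 (f @^-1` U n).
  by apply: f_cont; rewrite linear0; case: U_basis.
pose i := maxn n q.
apply: (submod_sub_trans (U_submod n) (y := f (ps i))).
  exact: (submod_basis_le U_basis (leq_trans (leq_maxl n q) (leq_maxr _ _)) (ps_close i)).
apply: (submod_subC (U_submod n)); rewrite -linearB; apply: Bq_small.
exact: (submod_basis_le B_basis (leq_trans (leq_maxr n q) (leq_addl _ _)) (x_lim i)).
Qed.

Lemma image_submod_basis : submod_basis (fun n => f @` B n).
Proof.
have [B_submod _ B_dec B_small] := B_basis; have [_ U_nbhs _ _] := U_basis; split.
- by move=> n; apply: submod_image.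
- by move=> n; have [m Um] := image_submod_basis_nbhs0 n; apply: filterS Um (U_nbhs m).
- by move=> n _ [x Bx <-]; exists x => //; apply: B_dec.
- move=> V V_nbhs; have /B_small [q BqV] : nbhs 0 (f @^-1` V).
    by apply: f_cont; rewrite linear0.
  by exists q => _ [x /BqV Vfx <-].
Qed.

End OpenMapping.

Lemma image_basis_open_map (R : topPzRingType) (M N : topLmodType R)
    (f : {linear M -> N}) (B : nat -> set M) :
  topological_module M -> topological_module N ->
  submod_basis B -> submod_basis (fun n => f @` B n) ->
  forall V : set M, open V -> open (f @` V).
Proof.
move=> M_top N_top [_ _ _ B_small] [_ fB_nbhs _ _] V oV.
rewrite openE => _ [x Vx <-].
have /(nbhs_translate0 M_top) /B_small [q BqV] : nbhs x V by move: oV; rewrite openE; apply.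
apply: filterS (nbhs0_translate N_top (f x) (fB_nbhs q)) => z [b Bb fbz].
by exists (x + b); [apply: BqV|rewrite linearD fbz addrC subrK].
Qed.

Section ContinuousSection.
Variables (R : topPzRingType) (M N : topLmodType R).
Hypotheses (M_top : topological_module M) (N_top : topological_module N).
Hypotheses (M_complete : module_complete M) (N_hausdorff : hausdorff_space N).
Variables (f : {linear M -> N}) (B : nat -> set M).
Hypotheses (B_basis : submod_basis B) (fB_basis : submod_basis (fun n => f @` B n)).
Hypothesis fB0 : f @` B 0 = setT.

Local Notation W n := (f @` B n).

Let W_submod n : is_submodule (W n). Proof. by case: fB_basis. Qed.

Definition section_correction n (t : N -> M) y :=
  xget 0 (fun x => B n x /\ W n.+1 (f (t y + x) - y)).

Lemma section_correctionP n (t : N -> M) y : W n (f (t y) - y) ->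
  B n (section_correction n t y) /\ W n.+1 (f (t y + section_correction n t y) - y).
Proof.
move=> /(submod_subC (W_submod n)) [x Bx fx].
suff corr_ex : exists x, B n x /\ W n.+1 (f (t y + x) - y) by exact: (xgetPex 0 corr_ex).
exists x; split=> //.
by rewrite linearD fx [f (t y) + _]addrC subrK subrr; apply: submod0.
Qed.

Fixpoint approx_section n : N -> M :=
  if n is n'.+1 then fun y => approx_section n' y + section_correction n' (approx_section n') y
  else fun=> 0.

Lemma approx_sectionP n :
  (forall y, W n (f (approx_section n y) - y)) /\
  (forall y z, W n (z - y) -> approx_section n z = approx_section n y).
Proof.
elim: n => [|n [s_close s_local]]; first by rewrite fB0.
split=> [y|y z Wzy]; first exact: (section_correctionP (s_close y)).2.
have [_ _ fB_dec _] := fB_basis.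
have sz := s_local y z (fB_dec n _ Wzy); rewrite /= sz.
congr (_ + xget 0 _); apply/funext => x; apply/propext; rewrite sz.
have congr_zy a := submod_sub_congrr (W_submod n.+1) (x := a) Wzy.
by split=> -[Bx Wx]; split=> //; apply/(congr_zy _).
Qed.

Lemma approx_section_step n y : B n (approx_section n.+1 y - approx_section n y).
Proof.
rewrite /= addrC addKr.
exact: (section_correctionP ((approx_sectionP n).1 y)).1.
Qed.

Definition cont_section y := xget 0 (fun x => forall n, B n (x - approx_section n y)).

Lemma cont_sectionP y n : B n (cont_section y - approx_section n y).
Proof.
move: n; apply: (xgetPex 0 (P := fun x => forall n, B n (x - approx_section n y))).
have [x x_lim] := submod_basis_cvg M_top B_basis M_complete (approx_section_step^~ y).
by exists x.
Qed.

Lemma cont_sectionK : cancel cont_section f.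
Proof.
move=> y; apply/eqP; rewrite -subr_eq0; apply/eqP.
apply: (submod_basis_eq0 N_top fB_basis N_hausdorff) => n.
apply: (submod_sub_trans (W_submod n) (y := f (approx_section n y))).
  by rewrite -linearB; exists (cont_section y - approx_section n y) => //; apply: cont_sectionP.
exact: (approx_sectionP n).1.
Qed.

Lemma cont_section_continuous : continuous cont_section.
Proof.
move=> y A /(nbhs_translate0 M_top); case: B_basis => B_submod _ _ B_small.
move=> /B_small [q BqA]; have [_ fB_nbhs _ _] := fB_basis.
apply: filterS (nbhs0_translate N_top y (fB_nbhs q)) => z Wzy /=.
have := BqA (cont_section z - cont_section y); rewrite [cont_section y + _]addrC subrK; apply.
apply: (submod_sub_trans (B_submod q) (y := approx_section q y)).
  by rewrite -((approx_sectionP q).2 y z Wzy); apply: cont_sectionP.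
exact/(submod_subC (B_submod q))/cont_sectionP.
Qed.

End ContinuousSection.

Lemma surjective_strict_section (R : topPzRingType) (M N : topLmodType R)
    (f : {linear M -> N}) :
  td_module M -> td_module N -> continuous f -> (forall y, exists x, f x = y) ->
  strict f /\ exists s : N -> M, continuous s /\ cancel s f.
Proof.
move=> tdM tdN f_cont f_surj.
have [M_top _ M_complete _ M_second] := tdM.
have [N_top N_hausdorff N_complete _ _] := tdN.
have [B [B_basis B0]] := td_submod_basis tdM.
have [U [U_basis _]] := td_submod_basis tdN.
have fB_basis := image_submod_basis M_top N_top M_complete N_complete U_basis
  M_second f_surj N_hausdorff f_cont B_basis.
split; first exact/open_map_strict/(image_basis_open_map M_top N_top B_basis fB_basis).
have fB0 : f @` B 0 = setT.
  by rewrite B0; apply/seteqP; split=> // y _; have [x <-] := f_surj y; exists x.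
exists (cont_section f B); split; first exact: cont_section_continuous.
exact: cont_sectionK.
Qed.

Lemma strict_injective_retraction (R : topPzRingType) (M N : topLmodType R)
    (i : {linear M -> N}) :
  td_module M -> td_module N -> continuous i -> injective i -> strict i ->
  exists r : N -> M, continuous r /\ cancel i r.
Proof.
move=> [M_top _ M_complete M_small _] tdN i_cont i_inj i_strict.
have [N_top N_hausdorff _ _ _] := tdN.
have [U [U_basis U0]] := td_submod_basis tdN.
have iU_basis := strict_preimage_submod_basis i_cont i_inj i_strict M_small U_basis.
exists (retraction i U); split; first exact: retraction_continuous.
exact: retractionK.
Qed.

Theorem proposition2p7 (R : topPzRingType)
  (R_topring : topological_ring R) (R_compact : compact [set: R])
  (R_hausdorff : hausdorff_space R) (R_first : first_countable R) :
  (forall (M N : topLmodType R), td_module M -> td_module N ->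
     forall f : {linear M -> N}, continuous f ->
     (forall y : N, exists x : M, f x = y) ->
     strict f /\ exists s : N -> M, continuous s /\ cancel s f)
  /\
  (forall (M N : topLmodType R), td_module M -> td_module N ->
     forall i : {linear M -> N}, continuous i -> injective i ->
     (strict i <-> exists r : N -> M, continuous r /\ cancel i r)).
Proof.
split=> [M N tdM tdN f f_cont f_surj|M N tdM tdN i i_cont i_inj].
  exact: surjective_strict_section.
split; first exact: strict_injective_retraction.
by move=> [r [r_cont iK]]; apply: retract_strict iK.
Qed.
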